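(* Let $(p_m)$ and $(q_n)$ belong to $SVA_{reg(\alpha)}$ (for some $\alpha\ge0$), and let $(u_{mn})$ be a double sequence of real numbers that is $(\overline{N},p,q)$ summable to a number $\ell$. If $$\frac{P_m}{p_m}\Delta_{10}u_{mn}=O_L(1)\quad\text{and}\quad\frac{Q_n}{q_n}\Delta_{01}u_{mn}=O_L(1),$$ then $(u_{mn})$ is $P$-convergent to $\ell$.
   Context: Weights: $(p_m)_{m\ge0},(q_n)_{n\ge0}$ are sequences of positive reals with $P_m=\sum_{i=0}^m p_i\to\infty$ and $Q_n=\sum_{j=0}^n q_j\to\infty$. $SVA_{reg(\alpha)}$ denotes the set of positive sequences $(p_m)$ whose partial sums have the form $P_m=(m+1)^{\alpha}L(m)$ ($m\ge0$) with a constant $\alpha\ge0$ and a slowly varying function $L$ on $(0,\infty)$, i.e. $L$ positive, measurable, and $L(\lambda t)/L(t)\to1$ as $t\to\infty$ for every $\lambda>0$. The weighted means are $\sigma_{mn}=\frac{1}{P_mQ_n}\sum_{i=0}^m\sum_{j=0}^n p_iq_ju_{ij}$; $(u_{mn})$ is $(\overline{N},p,q)$ summable to $\ell$ if $(\sigma_{mn})$ is $P$-convergent to $\ell$. A double sequence $(a_{mn})$ is $P$-convergent to $\ell$ if for every $\epsilon>0$ there is $n_0$ with $|a_{mn}-\ell|<\epsilon$ whenever $m,n\ge n_0$. $\Delta_{10}u_{mn}=u_{mn}-u_{m-1,n}$ and $\Delta_{01}u_{mn}=u_{mn}-u_{m,n-1}$. For a real double array, $a_{mn}=O_L(1)$ means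 there exist constants $M>0$ and $n_0$ such that $a_{mn}\ge -M$ for all $m,n\ge n_0$. *)

From HB Require Import structures.
From mathcomp Require Import all_boot all_order all_algebra.
From mathcomp Require Import all_classical all_reals all_analysis.
Set Implicit Arguments. Unset Strict Implicit. Unset Printing Implicit Defensive.
Import Order.TTheory GRing.Theory Num.Theory.
Local Open Scope classical_set_scope.
Local Open Scope ring_scope.

Section Defs.
Variable R : realType.

Definition psum (p : nat -> R) (m : nat) : R := \sum_(i < m.+1) p i.

Definition diverges (a : nat -> R) : Prop :=
  forall M : R, exists N : nat, forall m, (N <= m)%N -> M < a m.

Definition slowly_varying (L : R -> R) : Prop :=
  (forall t, 0 < t -> 0 < L t) /\
  measurable_fun (`]0%R, +oo[%classic : set R) L /\
  (forall lam : R, 0 < lam ->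
     forall eps : R, 0 < eps -> exists M : R, forall t : R, M < t ->
       `| L (lam * t) / L t - 1 | < eps).

Definition SVA_reg (alpha : R) (p : nat -> R) : Prop :=
  (forall m, 0 < p m) /\
  exists L : R -> R, slowly_varying L /\
    forall m : nat, psum p m = (m.+1%:R) `^ alpha * L m%:R.

Definition wmean (p q : nat -> R) (u : nat -> nat -> R) (m n : nat) : R :=
  (psum p m * psum q n)^-1 *
  \sum_(i < m.+1) \sum_(j < n.+1) p i * q j * u i j.

Definition P_conv (a : nat -> nat -> R) (l : R) : Prop :=
  forall eps : R, 0 < eps -> exists n0 : nat, forall m n,
    (n0 <= m)%N -> (n0 <= n)%N -> `| a m n - l | < eps.

Definition NNsummable (p q : nat -> R) (u : nat -> nat -> R) (l : R) : Prop :=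
  P_conv (wmean p q u) l.

(* forward differences; at index 0 the truncated predecessor is used *)
Definition D10 (u : nat -> nat -> R) m n : R := u m n - u m.-1 n.
Definition D01 (u : nat -> nat -> R) m n : R := u m n - u m n.-1.

Definition O_L (a : nat -> nat -> R) : Prop :=
  exists M : R, 0 < M /\ exists n0 : nat, forall m n,
    (n0 <= m)%N -> (n0 <= n)%N -> - M <= a m n.

End Defs.

From HB Require Import structures.
From mathcomp Require Import all_boot all_order all_algebra.
From mathcomp Require Import all_classical all_reals all_analysis.
From mathcomp Require Import ring lra zify.
Set Implicit Arguments. Unset Strict Implicit. Unset Printing Implicit Defensive.
Import Order.TTheory GRing.Theory Num.Theory.
Local Open Scope classical_set_scope.
Local Open Scope ring_scope.

(* Regular variation of P_m = (m+1)^alpha L(m) gives P_{m+1} <= (1 + d) P_m eventually,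
   for every d > 0; as P diverges, every large m has indices a <= m <= A with P_m / P_a
   and P_A / P_m between 1 + d and 1 + 3d, and likewise for Q.  The one-sided
   conditions, bounded below by -H, make u almost monotone: on [a,m] x [b,n] it stays
   below u_mn + 6Hd and on [m,A] x [n,B] above u_mn - 6Hd.  By inclusion-exclusion the
   weighted mean of u over such a rectangle is a combination of four means sigma, hence
   within 9e/d^2 of l once sigma is e-close to l.  So |u_mn - l| <= 9e/d^2 + 6Hd, which
   is small for d small and e = O(d^2). *)

Section PartialSums.
Variables (R : realType) (p : nat -> R).

Lemma psumS m : psum p m.+1 = psum p m + p m.+1.
Proof. by rewrite /psum big_ord_recr. Qed.

Lemma sum_ord_sub (F : nat -> R) a A : (a <= A)%N ->
  \sum_(i < A.+1) F i - \sum_(i < a.+1) F i = \sum_(a.+1 <= i < A.+1) F i.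
Proof.
move=> aA; rewrite -!(big_mkord xpredT).
by rewrite (big_cat_nat (n := a.+1) (m := 0) (p := A.+1)) // addrC addKr.
Qed.

Hypothesis p_gt0 : forall m, 0 < p m.

Lemma psum_gt0 m : 0 < psum p m.
Proof. by elim: m => [|m IH]; rewrite ?psumS ?addr_gt0 // /psum big_ord1. Qed.

Lemma psum_nondecreasing : nondecreasing_seq (psum p).
Proof. by apply/nondecreasing_seqP => m; rewrite psumS lerDl ltW. Qed.

End PartialSums.

Lemma first_crossing (R : realType) (f : nat -> R) T K k :
  (K <= k)%N -> f K <= T -> T < f k -> exists2 j, (K <= j)%N & f j <= T < f j.+1.
Proof.
elim: k => [|k IH] Kk fK Tk.
  by move: Kk fK; rewrite leqn0 => /eqP->; rewrite leNgt Tk.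
move: Kk; rewrite leq_eqVlt => /predU1P[Kk|Kk]; first by rewrite Kk leNgt Tk in fK.
have [fk|Tfk] := leP (f k) T; first by exists k; rewrite ?fk.
exact: IH.
Qed.

Section RegularVariation.
Variable R : realType.

Lemma expr1D_le (x : R) n : 0 <= x <= 1 -> (1 + x) ^+ n <= 1 + 3 ^+ n * x.
Proof.
case/andP => x_ge0 x_le1; elim: n => [|n IH]; first by rewrite !expr0 mul1r lerDl.
have C_ge1 : 1 <= (3 : R) ^+ n by rewrite exprn_ege1 // ler1n.
rewrite exprS [3 ^+ n.+1]exprS; apply: le_trans (ler_wpM2l _ IH) _; first lra.
have : 0 <= 3 ^+ n * x * (1 - x) by rewrite !mulr_ge0 //; lra.
have : 0 <= (3 ^+ n - 1) * x by rewrite mulr_ge0 //; lra.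
nra.
Qed.

Lemma powR_succ_ratio_le (alpha e : R) : 0 <= alpha -> 0 < e ->
  exists2 b, (0 < b)%N & (b.+1%:R / b%:R) `^ alpha <= 1 + e.
Proof.
move=> alpha_ge0 e_gt0; pose n := Num.bound alpha; pose C : R := 3 ^+ n.
exists (Num.bound (C / e)).+1 => //; set b := (Num.bound (C / e)).+1.
have b_gt0 : 0 < b%:R :> R by rewrite ltr0n.
have -> : b.+1%:R / b%:R = 1 + b%:R^-1 :> R.
  by rewrite -natr1 mulrDl divff ?gt_eqF // mul1r.
have b_inv : 0 <= (b%:R : R)^-1 <= 1 by rewrite invr_ge0 ltW //= invf_le1 // ler1n.
have [binv_ge0 _] := andP b_inv.
apply: le_trans (ler_powR _ (ltW (archi_boundP alpha_ge0))) _; first by rewrite lerDl.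
rewrite powR_mulrn ?addr_ge0 //.
apply: le_trans (expr1D_le n b_inv) _; rewrite lerD2l -/C.
rewrite ler_pdivrMr // -ler_pdivrMl // mulrC; apply: ltW.
by rewrite /b -natr1 (lt_le_trans (archi_boundP _)) ?lerDl // divr_ge0 ?exprn_ge0 ?ltW.
Qed.

Lemma step_le_of_block_le (P : nat -> R) (c : R) b :
  nondecreasing_seq P -> 0 <= c -> (0 < b)%N ->
  (\forall k \near \oo, P (b.+1 * k) <= c * P (b * k)) ->
  \forall m \near \oo, P m.+1 <= c * P m.
Proof.
move=> P_nd c_ge0 b_gt0 block; have /cvgnyPge divb := cvg_divnr _ b_gt0.
near=> m.
have [b_le_k blk] : (b <= m %/ b)%N /\ P (b.+1 * (m %/ b))%N <= c * P (b * (m %/ b))%N.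
  by split; near: m; [exact: divb | exact: cvg_divnr _ b_gt0 _ block].
have mb := ltn_ceil m b_gt0; have bm := leq_divM m b.
move: (m %/ b)%N b_le_k blk mb bm => k b_le_k blk mb bm.
apply: le_trans (P_nd m.+1 (b.+1 * k)%N _) _; first nia.
by apply: le_trans blk _; rewrite ler_wpM2l // P_nd // mulnC.
Unshelve. all: end_near. Qed.

(* Only the limit of L (lam t) / L t at the single ratio lam = (b+1)/b is used, along
   t = b k; monotonicity of the partial sums handles the remaining indices, so no uniform
   convergence theorem for L is needed. *)
Lemma SVA_reg_psum_block_le alpha (p : nat -> R) e : 0 <= alpha -> SVA_reg alpha p -> 0 < e ->
  exists2 b, (0 < b)%N &
    \forall k \near \oo, psum p (b.+1 * k) <= (1 + e) ^+ 2 * psum p (b * k).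
Proof.
move=> alpha_ge0 [p_gt0 [L [[L_gt0 [_ L_sv]] psumE]]] e_gt0.
have [b b_gt0 pow_le] := powR_succ_ratio_le alpha_ge0 e_gt0.
set lam : R := b.+1%:R / b%:R in pow_le.
have b_gt0' : 0 < b%:R :> R by rewrite ltr0n.
have lam_gt0 : 0 < lam by rewrite divr_gt0.
have [M L_near] := L_sv lam lam_gt0 e e_gt0.
exists b => //; near=> k.
have k_gt0 : (0 < k)%N by near: k; exact: nbhs_infty_gt.
have bk_gt0 : 0 < (b * k)%:R :> R by rewrite ltr0n muln_gt0 b_gt0.
have M_lt : M < (b * k)%:R.
  apply: (lt_le_trans (_ : M < M + 1)); first lra.
  apply: le_trans (_ : k%:R <= _); last by rewrite ler_nat leq_pmull.
  by near: k; exact: nbhs_infty_ger.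
have L_le : L (b.+1 * k)%:R <= (1 + e) * L (b * k)%:R.
  have := ltW (L_near _ M_lt).
  have -> : lam * (b * k)%:R = (b.+1 * k)%:R by rewrite /lam !natrM mulrA divfK ?gt_eqF.
  by rewrite ler_norml => /andP[_]; rewrite lerBlDr ler_pdivrMr ?L_gt0 // addrC.
have pow_le' : (b.+1 * k).+1%:R `^ alpha <= (1 + e) * (b * k).+1%:R `^ alpha.
  apply: le_trans (_ : (lam * (b * k).+1%:R) `^ alpha <= _).
    apply: (ge0_ler_powR alpha_ge0); rewrite ?nnegrE ?mulr_ge0 ?(ltW lam_gt0) //.
    rewrite /lam mulrAC ler_pdivlMr // -!natrM ler_nat; nia.
  by rewrite powRM ?ler_wpM2r ?powR_ge0 ?(ltW lam_gt0).
rewrite !psumE; apply: le_trans (ler_pM _ _ pow_le' L_le) _.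
- exact: powR_ge0.
- by apply/ltW/L_gt0; rewrite ltr0n muln_gt0 k_gt0.
- by rewrite mulrACA -expr2.
Unshelve. all: end_near. Qed.

Lemma SVA_reg_psumS_le alpha (p : nat -> R) eta : 0 <= alpha -> SVA_reg alpha p -> 0 < eta ->
  \forall m \near \oo, psum p m.+1 <= (1 + eta) * psum p m.
Proof.
move=> alpha_ge0 SVAp eta_gt0; pose e := Num.min eta 1 / 3.
have e_gt0 : 0 < e by rewrite divr_gt0 // lt_min eta_gt0 ltr01.
have e_le : e <= eta / 3 /\ e <= 1 / 3 by split; rewrite ler_pM2r // ge_min lexx ?orbT.
have ee : (1 + e) ^+ 2 <= 1 + eta by case: e_le => *; nra.
have [b b_gt0 block] := SVA_reg_psum_block_le alpha_ge0 SVAp e_gt0.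
have [p_gt0 _] := SVAp.
apply: filterS (step_le_of_block_le (psum_nondecreasing p_gt0) _ b_gt0 block) => [m|].
  by move/le_trans; apply; rewrite ler_wpM2r // ltW // psum_gt0.
by rewrite exprn_ge0 // addr_ge0 // ltW.
Qed.

End RegularVariation.

Section RelativeIncrements.
Variables (R : realType) (P : nat -> R).

Definition rel_incr a A := P A / P a - 1.

Hypotheses (P_gt0 : forall m, 0 < P m) (P_nd : nondecreasing_seq P).

Lemma rel_incr_le_r a i A : (i <= A)%N -> rel_incr a i <= rel_incr a A.
Proof. by move=> iA; rewrite lerD2r ler_pM2r ?invr_gt0 // P_nd. Qed.

Lemma rel_incr_le_l a i A : (a <= i)%N -> rel_incr i A <= rel_incr a A.
Proof. by move=> ai; rewrite lerD2r ler_pM2l // lef_pV2 ?posrE // P_nd. Qed.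

Lemma rel_incr_window d a A : 0 < d -> d <= 1 ->
  (1 + d) * P a <= P A <= (1 + d) ^+ 2 * P a -> d <= rel_incr a A <= 3 * d.
Proof.
move=> d_gt0 d_le1 /andP[lo hi]; have Pa := P_gt0 a.
apply/andP; split; first by rewrite lerBrDr ler_pdivlMr // addrC.
by rewrite lerBlDr ler_pdivrMr //; apply: le_trans hi _; rewrite ler_pM2r //; nra.
Qed.

Lemma rel_incr_sum_le d a A : 0 < d -> d <= 1 ->
  d <= rel_incr a A -> d * (P A + P a) <= 3 * (P A - P a).
Proof.
move=> d_gt0 d_le1 d_le; have Pa := P_gt0 a; have PA : P A = (1 + rel_incr a A) * P a.
  by rewrite /rel_incr addrC subrK divfK ?gt_eqF.
rewrite PA; move: (rel_incr a A) d_le PA => r d_le _.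
have -> : d * ((1 + r) * P a + P a) = d * (2 + r) * P a by ring.
have -> : 3 * ((1 + r) * P a - P a) = 3 * r * P a by ring.
rewrite ler_pM2r //; nra.
Qed.

Variable d : R.
Hypotheses (d_gt0 : 0 < d) (d_le1 : d <= 1).
Hypotheses (P_div : diverges P) (P_step : \forall m \near \oo, P m.+1 <= (1 + d) * P m).

Lemma rel_incr_above : \forall m \near \oo, exists2 A, (m <= A)%N & d <= rel_incr m A <= 3 * d.
Proof.
case: P_step => K _ stepK; exists K => [//|m /= Km].
have [k Pk] := P_div ((1 + d) * P m).
have Pm_le : P m <= (1 + d) * P m by rewrite ler_pMl // lerDl ltW.
have [j mj /andP[Pj PSj]] := first_crossing (leq_maxr k m) Pm_le (Pk _ (leq_maxl k m)).
exists j.+1; first exact: leqW.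
apply: rel_incr_window => //; rewrite (ltW PSj) /=.
apply: le_trans (stepK j (leq_trans Km mj)) _.
by rewrite expr2 -mulrA ler_wpM2l ?addr_ge0 ?(ltW d_gt0).
Qed.

Lemma rel_incr_below N :
  \forall m \near \oo, exists2 a, (N <= a <= m)%N & d <= rel_incr a m <= 3 * d.
Proof.
case: P_step => K _ stepK; pose K' := maxn N K.
have [M PM] := P_div ((1 + d) * P K'); exists M => [//|m /= Mm].
have Pm_lt : P m < (1 + d) * P (maxn K' m).
  apply: lt_le_trans (_ : P m < (1 + d) * P m) _; first by rewrite ltr_pMl // ltrDl.
  by rewrite ler_wpM2l ?P_nd ?leq_maxr ?addr_ge0 ?(ltW d_gt0).
have [a K'a /andP[Pa PSa]] := first_crossing (f := fun k => (1 + d) * P k)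
  (leq_maxl K' m) (ltW (PM m Mm)) Pm_lt.
have [K'_N K'_K] : (N <= K')%N /\ (K <= K')%N by rewrite leq_maxl leq_maxr.
have am : (a <= m)%N.
  rewrite leqNgt; apply/negP => /ltnW/P_nd Pma.
  have : P a < (1 + d) * P a by rewrite ltr_pMl // ltrDl.
  lra.
exists a; first by rewrite am (leq_trans K'_N).
apply: rel_incr_window => //; rewrite Pa /=; apply: ltW (lt_le_trans PSa _).
by rewrite expr2 -mulrA ler_wpM2l ?addr_ge0 ?(ltW d_gt0) // stepK //= (leq_trans K'_K).
Qed.

Lemma rel_incr_windows N : \forall m \near \oo,
  (exists2 a, (N <= a <= m)%N & d <= rel_incr a m <= 3 * d) /\
  (exists2 A, (m <= A)%N & d <= rel_incr m A <= 3 * d).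
Proof. by apply/near_andP; split; [exact: rel_incr_below | exact: rel_incr_above]. Qed.

End RelativeIncrements.

Section OneSidedTauberian.
Variables (R : realType) (p v : nat -> R) (H : R) (N : nat).
Hypotheses (p_gt0 : forall m, 0 < p m) (H_ge0 : 0 <= H).
Hypothesis v_incr_ge : forall k, (N <= k)%N -> - H <= psum p k / p k * (v k - v k.-1).

Lemma tauber_incr_ge a i : (N <= a)%N -> (a <= i)%N ->
  - H * (psum p i - psum p a) <= psum p a * (v i - v a).
Proof.
move=> Na /subnKC <-; elim: (i - a)%N => [|k IH].
  by rewrite addn0 !subrr !mulr0.
rewrite addnS psumS; set k1 := (a + k).+1.
have ak1 : (a <= k1)%N by rewrite leqW // leq_addr.
have Pa_le : psum p a <= psum p k1 := psum_nondecreasing p_gt0 ak1.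
have step : - H * p k1 <= psum p k1 * (v k1 - v (a + k)%N).
  have := ler_wpM2r (ltW (p_gt0 k1)) (v_incr_ge (leq_trans Na ak1)).
  by rewrite mulrAC divfK ?gt_eqF.
have : - H * p k1 <= psum p a * (v k1 - v (a + k)%N).
  have Hp : 0 <= H * p k1 by rewrite mulr_ge0 // ltW.
  have Pa_gt0 := psum_gt0 p_gt0 a.
  have [dv_ge0|dv_lt0] := leP 0 (v k1 - v (a + k)%N); first nra.
  by apply: le_trans step _; rewrite ler_wnM2r ?(ltW dv_lt0).
lra.
Qed.

Lemma tauber_rel_incr_ge a i : (N <= a)%N -> (a <= i)%N ->
  - H * rel_incr (psum p) a i <= v i - v a.
Proof.
move=> Na ai; have Pa := psum_gt0 p_gt0 a.
rewrite -(ler_pM2l Pa); apply: le_trans (tauber_incr_ge Na ai).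
by rewrite /rel_incr le_eqVlt; apply/orP; left; apply/eqP; field; rewrite gt_eqF.
Qed.

Lemma tauber_ge a i A : (N <= a)%N -> (a <= i <= A)%N ->
  v a - H * rel_incr (psum p) a A <= v i.
Proof.
move=> Na /andP[ai iA]; have := tauber_rel_incr_ge Na ai.
have := ler_wpM2l H_ge0 (rel_incr_le_r (psum_gt0 p_gt0) (psum_nondecreasing p_gt0) a iA).
lra.
Qed.

Lemma tauber_le a i A : (N <= a)%N -> (a <= i <= A)%N ->
  v i <= v A + H * rel_incr (psum p) a A.
Proof.
move=> Na /andP[ai iA]; have := tauber_rel_incr_ge (leq_trans Na ai) iA.
have := ler_wpM2l H_ge0 (rel_incr_le_l (psum_gt0 p_gt0) (psum_nondecreasing p_gt0) A ai).
lra.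
Qed.

End OneSidedTauberian.

Section Corners.
Variables (R : realType) (p q : nat -> R) (u : nat -> nat -> R) (H : R) (N : nat).
Hypotheses (p_gt0 : forall m, 0 < p m) (q_gt0 : forall n, 0 < q n) (H_ge0 : 0 <= H).
Hypothesis D_ge : forall m n, (N <= m)%N -> (N <= n)%N ->
  - H <= psum p m / p m * D10 u m n /\ - H <= psum q n / q n * D01 u m n.

Lemma rect_corner_ge a A b B i j : (N <= a)%N -> (N <= b)%N ->
  (a <= i <= A)%N -> (b <= j <= B)%N ->
  u a b - H * (rel_incr (psum p) a A + rel_incr (psum q) b B) <= u i j.
Proof.
move=> Na Nb aiA bjB; have [bj _] := andP bjB.
have := tauber_ge (v := u a) q_gt0 H_ge0 (fun k Nk => (D_ge Na Nk).2) Nb bjB.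
have := tauber_ge (v := u^~ j) p_gt0 H_ge0 (fun k Nk => (D_ge Nk (leq_trans Nb bj)).1) Na aiA.
lra.
Qed.

Lemma rect_corner_le a A b B i j : (N <= a)%N -> (N <= b)%N ->
  (a <= i <= A)%N -> (b <= j <= B)%N ->
  u i j <= u A B + H * (rel_incr (psum p) a A + rel_incr (psum q) b B).
Proof.
move=> Na Nb aiA bjB; have [ai _] := andP aiA; have [bj jB] := andP bjB.
have Ni := leq_trans Na ai.
have := tauber_le (v := u i) q_gt0 H_ge0 (fun k Nk => (D_ge Ni Nk).2) Nb bjB.
have := tauber_le (v := u^~ B) p_gt0 H_ge0
  (fun k Nk => (D_ge Nk (leq_trans Nb (leq_trans bj jB))).1) Na aiA.
lra.
Qed.

End Corners.

Section RectangleSums.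
Variables (R : realType) (p q : nat -> R).

Definition wsum (u : nat -> nat -> R) m n :=
  \sum_(i < m.+1) \sum_(j < n.+1) p i * q j * u i j.

Definition rect_sum (u : nat -> nat -> R) a A b B :=
  \sum_(a.+1 <= i < A.+1) \sum_(b.+1 <= j < B.+1) p i * q j * u i j.

Lemma rect_sumE u a A b B : (a <= A)%N -> (b <= B)%N ->
  rect_sum u a A b B = wsum u A B - wsum u a B - (wsum u A b - wsum u a b).
Proof.
move=> aA bB; pose row n i := \sum_(j < n.+1) p i * q j * u i j.
rewrite /wsum (sum_ord_sub (row B)) // (sum_ord_sub (row b)) // -sumrB.
by apply: eq_bigr => i _; rewrite (sum_ord_sub (fun j => p i * q j * u i j)).
Qed.

Lemma rect_sum_cst c a A b B : (a <= A)%N -> (b <= B)%N ->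
  rect_sum (fun _ _ => c) a A b B = c * (psum p A - psum p a) * (psum q B - psum q b).
Proof.
move=> aA bB; rewrite /psum !sum_ord_sub // [c * _]mulr_sumr mulr_suml.
by apply: eq_bigr => i _; rewrite mulr_sumr; apply: eq_bigr => j _; ring.
Qed.

Hypotheses (p_gt0 : forall m, 0 < p m) (q_gt0 : forall n, 0 < q n).

Lemma ler_rect_sum u v a A b B :
  (forall i j, (a < i <= A)%N -> (b < j <= B)%N -> u i j <= v i j) ->
  rect_sum u a A b B <= rect_sum v a A b B.
Proof.
move=> uv; apply: ler_sum_nat => i /andP[ai iA]; apply: ler_sum_nat => j /andP[bj jB].
by rewrite ler_wpM2l ?uv ?ai ?bj ?mulr_ge0 ?(ltW (p_gt0 i)) ?(ltW (q_gt0 j)).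
Qed.

Lemma wsumE u m n : wsum u m n = psum p m * psum q n * wmean p q u m n.
Proof. by rewrite mulrA mulfV ?mul1r // mulf_neq0 // gt_eqF // psum_gt0. Qed.

Lemma rect_sum_near u l e N a A b B : (N <= a <= A)%N -> (N <= b <= B)%N ->
  (forall m n, (N <= m)%N -> (N <= n)%N -> `|wmean p q u m n - l| < e) ->
  `|rect_sum u a A b B - l * (psum p A - psum p a) * (psum q B - psum q b)|
    <= e * (psum p A + psum p a) * (psum q B + psum q b).
Proof.
move=> /andP[Na aA] /andP[Nb bB] near_l.
have corner x y : (N <= x)%N -> (N <= y)%N ->
    - (e * (psum p x * psum q y)) <= wsum u x y - l * (psum p x * psum q y)
      <= e * (psum p x * psum q y).
  move=> Nx Ny; have PQ_gt0 : 0 < psum p x * psum q y by rewrite mulr_gt0 ?psum_gt0.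
  rewrite -ler_norml wsumE mulrC -mulrBl normrM (gtr0_norm PQ_gt0) ler_pM2r //.
  exact/ltW/near_l.
have := corner A B; have := corner a B; have := corner A b; have := corner a b.
rewrite rect_sumE // ler_norml; move: (leq_trans Na aA) (leq_trans Nb bB) => NA NB.
move=> /(_ Na Nb)/andP[? ?] /(_ NA Nb)/andP[? ?] /(_ Na NB)/andP[? ?] /(_ NA NB)/andP[? ?].
apply/andP; split; lra.
Qed.

End RectangleSums.

Definition eventually2 (Q : nat -> nat -> Prop) :=
  exists N, forall m n, (N <= m)%N -> (N <= n)%N -> Q m n.

Lemma eventually2_and (Q1 Q2 : nat -> nat -> Prop) :
  eventually2 Q1 -> eventually2 Q2 -> eventually2 (fun m n => Q1 m n /\ Q2 m n).
Proof.
move=> [N1 Q1N] [N2 Q2N]; exists (maxn N1 N2) => m n.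
by rewrite !geq_max => /andP[m1 m2] /andP[n1 n2]; split; [exact: Q1N | exact: Q2N].
Qed.

Lemma O_L_max (R : realType) (a b : nat -> nat -> R) : O_L a -> O_L b ->
  exists2 H, 0 < H & eventually2 (fun m n => - H <= a m n /\ - H <= b m n).
Proof.
move=> [M1 [M1_gt0 aM]] [M2 [M2_gt0 bM]].
exists (Num.max M1 M2); first by rewrite lt_max M1_gt0.
have [M1_le M2_le] : M1 <= Num.max M1 M2 /\ M2 <= Num.max M1 M2.
  by rewrite !le_max !lexx orbT.
have [N abN] := eventually2_and aM bM; exists N => m n Nm Nn.
by have [aN bN] := abN m n Nm Nn; split; lra.
Qed.

Section TauberianEstimate.
Variables (R : realType) (p q : nat -> R) (u : nat -> nat -> R) (l H d e : R) (N : nat).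
Hypotheses (p_gt0 : forall m, 0 < p m) (q_gt0 : forall n, 0 < q n).
Hypotheses (H_ge0 : 0 <= H) (d_gt0 : 0 < d) (d_le1 : d <= 1).
Hypothesis D_ge : forall m n, (N <= m)%N -> (N <= n)%N ->
  - H <= psum p m / p m * D10 u m n /\ - H <= psum q n / q n * D01 u m n.
Hypothesis wmean_near : forall m n, (N <= m)%N -> (N <= n)%N -> `|wmean p q u m n - l| < e.

Lemma rect_sum_bounds a A b B : (N <= a <= A)%N -> (N <= b <= B)%N ->
  d <= rel_incr (psum p) a A -> d <= rel_incr (psum q) b B ->
  0 < (psum p A - psum p a) * (psum q B - psum q b) /\
  `|rect_sum p q u a A b B - l * (psum p A - psum p a) * (psum q B - psum q b)|
    <= 9 * e / d ^+ 2 * (psum p A - psum p a) * (psum q B - psum q b).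
Proof.
move=> NaA NbB dA dB.
have sP := rel_incr_sum_le (psum_gt0 p_gt0) d_gt0 d_le1 dA.
have sQ := rel_incr_sum_le (psum_gt0 q_gt0) d_gt0 d_le1 dB.
have sP_gt0 : 0 < d * (psum p A + psum p a) by rewrite mulr_gt0 ?addr_gt0 ?psum_gt0.
have sQ_gt0 : 0 < d * (psum q B + psum q b) by rewrite mulr_gt0 ?addr_gt0 ?psum_gt0.
have PA : 0 < psum p A - psum p a by lra.
have QB : 0 < psum q B - psum q b by lra.
split; first exact: mulr_gt0.
have := rect_sum_near p_gt0 q_gt0 NaA NbB wmean_near; rewrite !ler_norml => /andP[lo hi].
have e_ge0 : 0 <= e := ltW (le_lt_trans (normr_ge0 _) (wmean_near (leqnn N) (leqnn N))).
have err : e * (psum p A + psum p a) * (psum q B + psum q b)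
    <= 9 * e / d ^+ 2 * ((psum p A - psum p a) * (psum q B - psum q b)).
  have d2_gt0 : 0 < d ^+ 2 by rewrite exprn_gt0.
  rewrite -(ler_pM2r d2_gt0) [X in _ <= X]mulrAC divfK ?gt_eqF //.
  have -> : e * (psum p A + psum p a) * (psum q B + psum q b) * d ^+ 2 =
    e * (d * (psum p A + psum p a) * (d * (psum q B + psum q b))) by ring.
  have -> : 9 * e * ((psum p A - psum p a) * (psum q B - psum q b)) =
    e * (3 * (psum p A - psum p a) * (3 * (psum q B - psum q b))) by ring.
  by rewrite ler_wpM2l // ler_pM // ltW.
apply/andP; split; lra.
Qed.

Lemma top_corner_ge a A b B : (N <= a <= A)%N -> (N <= b <= B)%N ->
  d <= rel_incr (psum p) a A <= 3 * d -> d <= rel_incr (psum q) b B <= 3 * d ->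
  l - (9 * e / d ^+ 2 + 6 * H * d) <= u A B.
Proof.
move=> NaA NbB /andP[dA Ad] /andP[dB Bd]; have [[Na aA] [Nb bB]] := (andP NaA, andP NbB).
have [D_gt0] := rect_sum_bounds NaA NbB dA dB; rewrite ler_norml => /andP[lo _].
pose c := H * (rel_incr (psum p) a A + rel_incr (psum q) b B).
have c_le : c <= 6 * H * d by rewrite -mulrA mulrCA ler_wpM2l //; lra.
have : rect_sum p q u a A b B <= (u A B + c) * (psum p A - psum p a) * (psum q B - psum q b).
  rewrite -rect_sum_cst //; apply: ler_rect_sum => // i j /andP[ai iA] /andP[bj jB].
  by apply: (rect_corner_le p_gt0 q_gt0 H_ge0 D_ge Na Nb); rewrite ?(ltnW ai) ?(ltnW bj).
move=> hi; have : (l - 9 * e / d ^+ 2) * ((psum p A - psum p a) * (psum q B - psum q b))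
  <= (u A B + c) * ((psum p A - psum p a) * (psum q B - psum q b)) by lra.
by rewrite ler_pM2r // => ?; lra.
Qed.

Lemma bottom_corner_le a A b B : (N <= a <= A)%N -> (N <= b <= B)%N ->
  d <= rel_incr (psum p) a A <= 3 * d -> d <= rel_incr (psum q) b B <= 3 * d ->
  u a b <= l + (9 * e / d ^+ 2 + 6 * H * d).
Proof.
move=> NaA NbB /andP[dA Ad] /andP[dB Bd]; have [[Na aA] [Nb bB]] := (andP NaA, andP NbB).
have [D_gt0] := rect_sum_bounds NaA NbB dA dB; rewrite ler_norml => /andP[_ hi].
pose c := H * (rel_incr (psum p) a A + rel_incr (psum q) b B).
have c_le : c <= 6 * H * d by rewrite -mulrA mulrCA ler_wpM2l //; lra.
have : (u a b - c) * (psum p A - psum p a) * (psum q B - psum q b) <= rect_sum p q u a A b B.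
  rewrite -rect_sum_cst //; apply: ler_rect_sum => // i j /andP[ai iA] /andP[bj jB].
  by apply: (rect_corner_ge p_gt0 q_gt0 H_ge0 D_ge Na Nb); rewrite ?(ltnW ai) ?(ltnW bj).
move=> lo; have : (u a b - c) * ((psum p A - psum p a) * (psum q B - psum q b))
  <= (l + 9 * e / d ^+ 2) * ((psum p A - psum p a) * (psum q B - psum q b)) by lra.
by rewrite ler_pM2r // => ?; lra.
Qed.


Hypotheses (p_div : diverges (psum p)) (q_div : diverges (psum q)).
Hypothesis p_step : \forall m \near \oo, psum p m.+1 <= (1 + d) * psum p m.
Hypothesis q_step : \forall n \near \oo, psum q n.+1 <= (1 + d) * psum q n.

Lemma tauberian_estimate :
  eventually2 (fun m n => `|u m n - l| <= 9 * e / d ^+ 2 + 6 * H * d).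
Proof.
have [Kp _ win_p] := rel_incr_windows (psum_gt0 p_gt0) (psum_nondecreasing p_gt0)
  d_gt0 d_le1 p_div p_step N.
have [Kq _ win_q] := rel_incr_windows (psum_gt0 q_gt0) (psum_nondecreasing q_gt0)
  d_gt0 d_le1 q_div q_step N.
exists (maxn Kp Kq) => m n; rewrite !geq_max => /andP[mp _] /andP[_ nq].
have [[a Nam ra] [A mA rA]] := win_p m mp; have [[b Nbn rb] [B nB rB]] := win_q n nq.
have NmA : (N <= m <= A)%N by case/andP: Nam => Na am; rewrite (leq_trans Na am).
have NnB : (N <= n <= B)%N by case/andP: Nbn => Nb bn; rewrite (leq_trans Nb bn).
have := top_corner_ge Nam Nbn ra rb; have := bottom_corner_le NmA NnB rA rB.
by rewrite ler_norml => ? ?; apply/andP; split; lra.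
Qed.

End TauberianEstimate.

Theorem theorem4p2 (R : realType) (alpha : R) (p q : nat -> R)
    (u : nat -> nat -> R) (l : R) :
  0 <= alpha ->
  SVA_reg alpha p -> SVA_reg alpha q ->
  diverges (psum p) -> diverges (psum q) ->
  NNsummable p q u l ->
  O_L (fun m n => psum p m / p m * D10 u m n) ->
  O_L (fun m n => psum q n / q n * D01 u m n) ->
  P_conv u l.
Proof.
move=> alpha_ge0 SVAp SVAq p_div q_div summable Dp Dq eta eta_gt0.
have [[p_gt0 _] [q_gt0 _]] := (SVAp, SVAq).
have [H H_gt0 D_ge] := O_L_max Dp Dq.
pose d := Num.min 1 (eta / (12 * H)); pose e := eta * d ^+ 2 / 36.
have d_gt0 : 0 < d by rewrite lt_min ltr01 divr_gt0 ?mulr_gt0.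
have d_le1 : d <= 1 by rewrite ge_min lexx.
have e_gt0 : 0 < e by rewrite divr_gt0 // mulr_gt0 // exprn_gt0.
have Hd_le : H * d <= eta / 12.
  have : d <= eta / (12 * H) by rewrite ge_min lexx orbT.
  by rewrite ler_pdivlMr ?mulr_gt0 // => ?; rewrite ler_pdivlMr //; lra.
have err_lt : 9 * e / d ^+ 2 + 6 * H * d < eta.
  have -> : 9 * e / d ^+ 2 = eta / 4 by rewrite /e; field; rewrite gt_eqF.
  lra.
have [N near_N] := eventually2_and D_ge (summable e e_gt0).
have [K est] := tauberian_estimate p_gt0 q_gt0 (ltW H_gt0) d_gt0 d_le1
  (fun m n Nm Nn => (near_N m n Nm Nn).1) (fun m n Nm Nn => (near_N m n Nm Nn).2)
  p_div q_div (SVA_reg_psumS_le alpha_ge0 SVAp d_gt0) (SVA_reg_psumS_le alpha_ge0 SVAq d_gt0).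
by exists K => m n Km Kn; apply: le_lt_trans (est m n Km Kn) err_lt.
Qed.
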